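(* Let $K\subset\mathbb{T}$ be a Kronecker set with more than one point and let $T\in L(C(K))$ be $Tf(z)=zf(z)$. Then $T$ is not weakly supercyclic, while the set $\{aT^k\mathbf{1}+aT^m\mathbf{1}:a\in[0,\infty),\ k,m\in\mathbb{Z}_+\}$ is norm dense in $C(K)$.
   Context: $\mathbb{T}=\{z\in\mathbb{C}:|z|=1\}$; $C(K)$ is the complex Banach space of continuous functions on $K$ with sup norm; $\mathbf{1}$ is the constant function 1. A non-empty compact $K\subset\mathbb{T}$ is a Kronecker set if $\{u_n|_K:n\in\mathbb{Z}_+\}$, $u_n(z)=z^n$, is dense in $C(K,\mathbb{T})$ for the uniform metric. $T$ is weakly supercyclic if for some $x$ the set $\{zT^nx:z\in\mathbb{C},n\in\mathbb{Z}_+\}$ is weakly dense. *)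

From Stdlib Require Import Reals List.
Open Scope R_scope.

Record Cplx := mkC { Re : R ; Im : R }.

Definition Cadd (z w : Cplx) : Cplx := mkC (Re z + Re w) (Im z + Im w).
Definition Csub (z w : Cplx) : Cplx := mkC (Re z - Re w) (Im z - Im w).
Definition Cmul (z w : Cplx) : Cplx :=
  mkC (Re z * Re w - Im z * Im w) (Re z * Im w + Im z * Re w).
Definition RtoC (a : R) : Cplx := mkC a 0.
Definition Cone : Cplx := RtoC 1.
Definition Cnorm (z : Cplx) : R := sqrt (Re z * Re z + Im z * Im z).
Fixpoint Cpow (z : Cplx) (n : nat) : Cplx :=
  match n with O => Cone | S n => Cmul z (Cpow z n) end.

(* compactness in the metric space C = R^2 (sequential compactness) *)
Definition compact_set (K : Cplx -> Prop) : Prop :=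
  forall u : nat -> Cplx, (forall n, K (u n)) ->
  exists (phi : nat -> nat) (l : Cplx),
    (forall n m, (n < m)%nat -> (phi n < phi m)%nat) /\ K l /\
    forall eps, eps > 0 -> exists N, forall n, (n >= N)%nat ->
      Cnorm (Csub (u (phi n)) l) < eps.

Definition subset_circle (K : Cplx -> Prop) : Prop :=
  forall z, K z -> Cnorm z = 1.

(* An element of C(K) is represented by f : Cplx -> Cplx continuous on K;
   values outside K are irrelevant. *)
Definition cont_on (K : Cplx -> Prop) (f : Cplx -> Cplx) : Prop :=
  forall z, K z -> forall eps, eps > 0 -> exists delta, delta > 0 /\
    forall w, K w -> Cnorm (Csub w z) < delta -> Cnorm (Csub (f w) (f z)) < eps.

Definition Kronecker (K : Cplx -> Prop) : Prop :=
  (exists z, K z) /\ compact_set K /\ subset_circle K /\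
  forall h : Cplx -> Cplx, cont_on K h -> (forall z, K z -> Cnorm (h z) = 1) ->
  forall eps, eps > 0 -> exists n : nat,
    forall z, K z -> Cnorm (Csub (Cpow z n) (h z)) < eps.

Definition Tmul (f : Cplx -> Cplx) : Cplx -> Cplx := fun z => Cmul z (f z).
Fixpoint Titer (n : nat) (f : Cplx -> Cplx) : Cplx -> Cplx :=
  match n with O => f | S n => Tmul (Titer n f) end.

Definition bounded_linear_functional (K : Cplx -> Prop)
    (phi : (Cplx -> Cplx) -> Cplx) : Prop :=
  (forall f g, cont_on K f -> cont_on K g -> (forall z, K z -> f z = g z) ->
     phi f = phi g) /\
  (forall f g, cont_on K f -> cont_on K g ->
     phi (fun z => Cadd (f z) (g z)) = Cadd (phi f) (phi g)) /\
  (forall c f, cont_on K f -> phi (fun z => Cmul c (f z)) = Cmul c (phi f)) /\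
  (exists M, 0 <= M /\ forall f B, cont_on K f -> 0 <= B ->
     (forall z, K z -> Cnorm (f z) <= B) -> Cnorm (phi f) <= M * B).

(* S is dense in C(K) for the weak topology sigma(C(K), C(K)^* ) *)
Definition weakly_dense (K : Cplx -> Prop) (S : (Cplx -> Cplx) -> Prop) : Prop :=
  forall f, cont_on K f ->
  forall phis : list ((Cplx -> Cplx) -> Cplx),
    (forall phi, In phi phis -> bounded_linear_functional K phi) ->
  forall eps, eps > 0 ->
  exists g, S g /\ forall phi, In phi phis -> Cnorm (Csub (phi g) (phi f)) < eps.

Definition Tmul_weakly_supercyclic (K : Cplx -> Prop) : Prop :=
  exists x, cont_on K x /\
    weakly_dense K (fun g => exists (c : Cplx) (n : nat),
                       g = (fun z => Cmul c (Titer n x z))).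

Definition norm_dense (K : Cplx -> Prop) (S : (Cplx -> Cplx) -> Prop) : Prop :=
  forall f, cont_on K f -> forall eps, eps > 0 ->
  exists g, S g /\ forall z, K z -> Cnorm (Csub (f z) (g z)) < eps.

From Stdlib Require Import Reals List Lra Psatz ClassicalEpsilon
  FunctionalExtensionality PropExtensionality.
Open Scope R_scope.

(* Not weakly supercyclic (only K in the circle is used): T^n is a pointwise
   isometry on K, so |c T^n x| compares at two points za, zb exactly as |x| does;
   the two point evaluations then forbid approximating z |-> z - za.
   Density of {a z^k + a z^m : a >= 0}: Kronecker applied to conj gives N with
   z^N uniformly close to 1 on K; a second-order estimate of z^N - z'^N shows
   that points of K at distance < 1/(2N) are much closer, so K has arbitrarily
   fine locally constant retractions onto itself. Freeze f along one, rescale,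
   split each value of modulus <= 2 into two unimodular numbers: this gives
   continuous unimodular u, v, approximated by z^k and z^m via Kronecker. *)

Lemma Ceq (a b : Cplx) : Re a = Re b -> Im a = Im b -> a = b.
Proof. destruct a, b; simpl; intros; subst; reflexivity. Qed.

Lemma Cnorm_ge0 (z : Cplx) : 0 <= Cnorm z.
Proof. apply sqrt_pos. Qed.

Lemma Cnorm_sq (z : Cplx) : Cnorm z * Cnorm z = Re z * Re z + Im z * Im z.
Proof. apply sqrt_sqrt; nra. Qed.

Lemma Cnorm_mul (a b : Cplx) : Cnorm (Cmul a b) = Cnorm a * Cnorm b.
Proof. unfold Cnorm, Cmul; simpl; rewrite <- sqrt_mult by nra; f_equal; ring. Qed.

Lemma Cnorm_RtoC (r : R) : Cnorm (RtoC r) = Rabs r.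
Proof.
  unfold Cnorm, RtoC; simpl; rewrite <- sqrt_Rsqr_abs; unfold Rsqr; f_equal; ring.
Qed.

Lemma Cnorm_Cone : Cnorm Cone = 1.
Proof. unfold Cone; rewrite Cnorm_RtoC; apply Rabs_R1. Qed.

(* The triangle inequality, from the Cauchy-Schwarz inequality in R^2. *)
Lemma Cnorm_add (a b : Cplx) : Cnorm (Cadd a b) <= Cnorm a + Cnorm b.
Proof.
  pose proof (Cnorm_sq a) as Ha; pose proof (Cnorm_sq b) as Hb.
  pose proof (Cnorm_sq (Cadd a b)) as Hab.
  pose proof (Cnorm_ge0 a); pose proof (Cnorm_ge0 b); pose proof (Cnorm_ge0 (Cadd a b)).
  unfold Cadd in *; simpl in *.
  assert (Hcs : Re a * Re b + Im a * Im b <= Cnorm a * Cnorm b).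
  { assert (0 <= Cnorm a * Cnorm b) by nra.
    assert (Hsq : (Re a * Re b + Im a * Im b) * (Re a * Re b + Im a * Im b)
                  <= (Cnorm a * Cnorm b) * (Cnorm a * Cnorm b)).
    { replace ((Cnorm a * Cnorm b) * (Cnorm a * Cnorm b))
        with ((Cnorm a * Cnorm a) * (Cnorm b * Cnorm b)) by ring.
      rewrite Ha, Hb.
      pose proof (Rle_0_sqr (Re a * Im b - Im a * Re b)); unfold Rsqr in *; nra. }
    nra. }
  nra.
Qed.

Lemma Cnorm_sub_sym (a b : Cplx) : Cnorm (Csub a b) = Cnorm (Csub b a).
Proof. unfold Cnorm, Csub; simpl; f_equal; ring. Qed.

Lemma Cnorm_sub_tri (a b c : Cplx) :
  Cnorm (Csub a c) <= Cnorm (Csub a b) + Cnorm (Csub b c).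
Proof.
  replace (Csub a c) with (Cadd (Csub a b) (Csub b c)) by (apply Ceq; simpl; ring).
  apply Cnorm_add.
Qed.

Lemma Cnorm_rev (a b : Cplx) : Cnorm a - Cnorm b <= Cnorm (Csub a b).
Proof.
  pose proof (Cnorm_add (Csub a b) b) as H.
  replace (Cadd (Csub a b) b) with a in H by (apply Ceq; simpl; ring); lra.
Qed.

Lemma Cnorm_zero_eq (z : Cplx) : Cnorm z = 0 -> z = RtoC 0.
Proof. intro H; pose proof (Cnorm_sq z) as Hs; rewrite H in Hs; apply Ceq; simpl; nra. Qed.

Lemma Cnorm_sub_pos (a b : Cplx) : a <> b -> 0 < Cnorm (Csub a b).
Proof.
  intro Hab; destruct (Cnorm_ge0 (Csub a b)) as [|H0]; [assumption|exfalso].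
  apply Hab; apply eq_sym, Cnorm_zero_eq in H0.
  apply Ceq; [apply (f_equal Re) in H0|apply (f_equal Im) in H0]; simpl in H0; lra.
Qed.

Lemma Csub_self_norm (a : Cplx) : Cnorm (Csub a a) = 0.
Proof.
  replace (Csub a a) with (RtoC 0) by (apply Ceq; simpl; ring).
  rewrite Cnorm_RtoC; apply Rabs_R0.
Qed.

Lemma Cnorm_pow_unit (z : Cplx) (n : nat) : Cnorm z = 1 -> Cnorm (Cpow z n) = 1.
Proof.
  intro Hz; induction n as [|n IH]; simpl; [apply Cnorm_Cone|].
  rewrite Cnorm_mul, IH, Hz; ring.
Qed.

Definition Cconj (z : Cplx) : Cplx := mkC (Re z) (- Im z).

Lemma Cnorm_conj (z : Cplx) : Cnorm (Cconj z) = Cnorm z.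
Proof. unfold Cnorm, Cconj; simpl; f_equal; ring. Qed.

Lemma conj_cont (K : Cplx -> Prop) : cont_on K Cconj.
Proof.
  intros z _ eps He; exists eps; split; [assumption|]; intros w _ Hw.
  replace (Csub (Cconj w) (Cconj z)) with (Cconj (Csub w z)) by (apply Ceq; simpl; ring).
  rewrite Cnorm_conj; assumption.
Qed.

Lemma pow_diff (a b : Cplx) (k : nat) : Cnorm a = 1 -> Cnorm b = 1 ->
  Cnorm (Csub (Cpow a k) (Cpow b k)) <= INR k * Cnorm (Csub a b).
Proof.
  intros Ha Hb; induction k as [|k IH].
  - simpl; rewrite Csub_self_norm; lra.
  - replace (Csub (Cpow a (S k)) (Cpow b (S k))) with
      (Cadd (Cmul a (Csub (Cpow a k) (Cpow b k))) (Cmul (Cpow b k) (Csub a b)))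
      by (apply Ceq; simpl; ring).
    eapply Rle_trans; [apply Cnorm_add|].
    rewrite !Cnorm_mul, Ha, Cnorm_pow_unit, S_INR by exact Hb; lra.
Qed.

Lemma pow_taylor (z z' : Cplx) (m : nat) : Cnorm z = 1 -> Cnorm z' = 1 ->
  Cnorm (Csub (Csub (Cpow z (S m)) (Cpow z' (S m)))
              (Cmul (RtoC (INR (S m))) (Cmul (Cpow z m) (Csub z z'))))
  <= INR (S m) * INR (S m) * (Cnorm (Csub z z') * Cnorm (Csub z z')).
Proof.
  intros Hz Hz'; pose proof (Cnorm_ge0 (Csub z z')) as Hd0.
  induction m as [|m IH].
  - replace (Csub (Csub (Cpow z 1) (Cpow z' 1))
              (Cmul (RtoC (INR 1)) (Cmul (Cpow z 0) (Csub z z')))) with (RtoC 0)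
      by (apply Ceq; simpl; ring).
    rewrite Cnorm_RtoC, Rabs_R0; simpl; nra.
  - (* the remainder satisfies R(m+1) = z R(m) + (z'^(m+1) - z^(m+1)) (z - z') *)
    replace (Csub (Csub (Cpow z (S (S m))) (Cpow z' (S (S m))))
              (Cmul (RtoC (INR (S (S m)))) (Cmul (Cpow z (S m)) (Csub z z')))) with
      (Cadd (Cmul z (Csub (Csub (Cpow z (S m)) (Cpow z' (S m)))
              (Cmul (RtoC (INR (S m))) (Cmul (Cpow z m) (Csub z z')))))
            (Cmul (Csub (Cpow z' (S m)) (Cpow z (S m))) (Csub z z'))).
    2:{ rewrite (S_INR (S m)); change (Cpow z (S (S m))) with (Cmul z (Cpow z (S m))).
        change (Cpow z' (S (S m))) with (Cmul z' (Cpow z' (S m))).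
        change (Cpow z (S m)) with (Cmul z (Cpow z m)).
        change (Cpow z' (S m)) with (Cmul z' (Cpow z' m)).
        generalize (Cpow z m) (Cpow z' m) (INR (S m)); intros p q r.
        apply Ceq; simpl; ring. }
    eapply Rle_trans; [apply Cnorm_add|].
    rewrite !Cnorm_mul, Hz.
    pose proof (pow_diff z' z (S m) Hz' Hz) as Hdiff; rewrite (Cnorm_sub_sym z' z) in Hdiff.
    pose proof (pos_INR (S m)); rewrite (S_INR (S m)).
    assert (Cnorm (Csub (Cpow z' (S m)) (Cpow z (S m))) * Cnorm (Csub z z')
            <= INR (S m) * Cnorm (Csub z z') * Cnorm (Csub z z'))
      by (apply Rmult_le_compat_r; assumption).
    nra.
Qed.

(* Dichotomy for N-th powers on the circle: if x = N |z - z'| <= 1/2 then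
   |z^N - z'^N| >= x - x^2 >= x/2, so a small |z^N - z'^N| forces a small x. *)
Lemma power_dichotomy (z z' : Cplx) (m : nat) (e : R) : Cnorm z = 1 -> Cnorm z' = 1 ->
  Cnorm (Csub z z') * INR (S m) < /2 ->
  Cnorm (Csub (Cpow z (S m)) (Cpow z' (S m))) < e ->
  Cnorm (Csub z z') * INR (S m) < 2 * e.
Proof.
  intros Hz Hz' Hd He.
  pose proof (pow_taylor z z' m Hz Hz') as Ht.
  set (F := Csub (Csub (Cpow z (S m)) (Cpow z' (S m)))
              (Cmul (RtoC (INR (S m))) (Cmul (Cpow z m) (Csub z z')))) in Ht.
  assert (Hlin : Cmul (RtoC (INR (S m))) (Cmul (Cpow z m) (Csub z z')) =
                 Cadd (Csub (Cpow z (S m)) (Cpow z' (S m))) (Cmul (RtoC (-1)) F))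
    by (unfold F; apply Ceq; simpl; ring).
  pose proof (Cnorm_add (Csub (Cpow z (S m)) (Cpow z' (S m))) (Cmul (RtoC (-1)) F)) as Htri.
  assert (Habs : Rabs (-1) = 1) by (rewrite Rabs_left; lra).
  rewrite <- Hlin, !Cnorm_mul, !Cnorm_RtoC, Cnorm_pow_unit, Habs,
    Rabs_pos_eq in Htri by (exact Hz || apply pos_INR).
  pose proof (pos_INR (S m)); pose proof (Cnorm_ge0 (Csub z z')).
  set (x := Cnorm (Csub z z') * INR (S m)) in *.
  assert (INR (S m) * INR (S m) * (Cnorm (Csub z z') * Cnorm (Csub z z')) = x * x)
    by (unfold x; ring).
  assert (INR (S m) * (1 * Cnorm (Csub z z')) = x) by (unfold x; ring).
  assert (0 <= x) by (unfold x; nra).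
  assert (x * x <= x / 2) by nra.
  lra.
Qed.

Lemma unit_pow_S (z : Cplx) (n : nat) : Cnorm z = 1 ->
  Cnorm (Csub (Cpow z (S n)) Cone) = Cnorm (Csub (Cpow z n) (Cconj z)).
Proof.
  intro Hz; pose proof (Cnorm_sq z) as Hs; rewrite Hz in Hs.
  replace (Csub (Cpow z (S n)) Cone) with (Cmul z (Csub (Cpow z n) (Cconj z))).
  - rewrite Cnorm_mul, Hz; ring.
  - apply Ceq; simpl; nra.
Qed.

Lemma strict_mono_ge (phi : nat -> nat) :
  (forall n m, (n < m)%nat -> (phi n < phi m)%nat) -> forall n, (n <= phi n)%nat.
Proof.
  intros Hphi n; induction n as [|n IH]; [lia|].
  specialize (Hphi n (S n) ltac:(lia)); lia.
Qed.

Lemma inv_succ_small (e : R) : e > 0 -> exists n : nat, / (INR n + 1) < e.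
Proof.
  intro He; destruct (INR_unbounded (/ e)) as [n Hn]; exists n.
  pose proof (pos_INR n).
  apply (Rmult_lt_reg_l (INR n + 1)); [lra|]; rewrite Rinv_r by lra.
  apply (Rmult_lt_reg_l (/ e)); [apply Rinv_0_lt_compat; lra|].
  replace (/ e * ((INR n + 1) * e)) with (INR n + 1) by (field; lra); lra.
Qed.

Lemma compact_cont_bounded (K : Cplx -> Prop) (f : Cplx -> Cplx) :
  compact_set K -> cont_on K f ->
  exists M, M > 0 /\ forall z, K z -> Cnorm (f z) <= M.
Proof.
  intros HK Hf; apply NNPP; intro Hunb.
  assert (Hex : forall n : nat, exists z, K z /\ Cnorm (f z) > INR n + 1).
  { intro n; apply NNPP; intro Hn; apply Hunb; exists (INR n + 1); split.
    - pose proof (pos_INR n); lra.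
    - intros z Kz; apply Rnot_lt_le; intro Hc; apply Hn; exists z; split; assumption. }
  destruct (choice _ Hex) as [u Hu].
  destruct (HK u (fun n => proj1 (Hu n))) as [phi [l [Hphi [Kl Hconv]]]].
  destruct (Hf l Kl 1 ltac:(lra)) as [d [Hd Hcont]].
  destruct (Hconv d Hd) as [N HN].
  destruct (INR_unbounded (Cnorm (f l))) as [n0 Hn0].
  set (n := max N n0).
  assert (Hclose : Cnorm (Csub (f (u (phi n))) (f l)) < 1)
    by (apply Hcont; [apply Hu | apply HN; unfold n; lia]).
  assert (Hbig : INR n0 <= INR (phi n))
    by (apply le_INR; pose proof (strict_mono_ge phi Hphi n); unfold n in *; lia).
  pose proof (proj2 (Hu (phi n))); pose proof (Cnorm_rev (f (u (phi n))) (f l)).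
  lra.
Qed.

Lemma compact_unif_cont (K : Cplx -> Prop) (f : Cplx -> Cplx) :
  compact_set K -> cont_on K f ->
  forall eps, eps > 0 -> exists d, d > 0 /\ forall z w, K z -> K w ->
    Cnorm (Csub w z) < d -> Cnorm (Csub (f w) (f z)) < eps.
Proof.
  intros HK Hf eps He; apply NNPP; intro Hnot.
  assert (Hex : forall n : nat, exists p : Cplx * Cplx, K (fst p) /\ K (snd p) /\
     Cnorm (Csub (snd p) (fst p)) < / (INR n + 1) /\
     Cnorm (Csub (f (snd p)) (f (fst p))) >= eps).
  { intro n; apply NNPP; intro Hn; apply Hnot; exists (/ (INR n + 1)); split.
    - pose proof (pos_INR n); apply Rinv_0_lt_compat; lra.
    - intros z w Kz Kw Hzw; apply Rnot_le_lt; intro Hc; apply Hn.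
      exists (z, w); simpl; repeat split; auto; lra. }
  destruct (choice _ Hex) as [p Hp].
  destruct (HK (fun n => fst (p n)) (fun n => proj1 (Hp n)))
    as [phi [l [Hphi [Kl Hconv]]]].
  destruct (Hf l Kl (eps/2) ltac:(lra)) as [d [Hd Hcont]].
  destruct (Hconv (d/2) ltac:(lra)) as [N HN].
  destruct (inv_succ_small (d/2) ltac:(lra)) as [n0 Hn0].
  set (n := max N n0).
  destruct (Hp (phi n)) as [Kz [Kw [Hzw Hfzw]]].
  set (z := fst (p (phi n))) in *; set (w := snd (p (phi n))) in *.
  assert (Hzl : Cnorm (Csub z l) < d/2) by (apply HN; unfold n; lia).
  assert (Hsmall : / (INR (phi n) + 1) <= / (INR n0 + 1)).
  { apply Rinv_le_contravar; [pose proof (pos_INR n0); lra|].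
    apply Rplus_le_compat_r, le_INR.
    pose proof (strict_mono_ge phi Hphi n); unfold n in *; lia. }
  assert (Hwl : Cnorm (Csub w l) < d)
    by (pose proof (Cnorm_sub_tri w z l); lra).
  pose proof (Hcont w Kw Hwl); pose proof (Hcont z Kz ltac:(lra)).
  pose proof (Cnorm_sub_tri (f w) (f l) (f z)) as Htri.
  rewrite (Cnorm_sub_sym (f l)) in Htri; lra.
Qed.

Lemma Titer_norm (x : Cplx -> Cplx) (n : nat) (z : Cplx) :
  Cnorm z = 1 -> Cnorm (Titer n x z) = Cnorm (x z).
Proof.
  intro Hz; induction n as [|n IH]; simpl; [reflexivity|].
  unfold Tmul; rewrite Cnorm_mul, Hz, IH; ring.
Qed.

Lemma eval_blf (K : Cplx -> Prop) (p : Cplx) :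
  K p -> bounded_linear_functional K (fun g => g p).
Proof.
  intro Kp; split; [|split; [|split]].
  - intros f g _ _ H; apply H, Kp.
  - reflexivity.
  - reflexivity.
  - exists 1; split; [lra|]; intros f B _ _ Hf; rewrite Rmult_1_l; apply Hf, Kp.
Qed.

(* Weak density of the projective orbit fails already against the two point
   evaluations at za and zb, if |x zb| <= |x za|: approximating z |-> z - za
   would need |c x za| < d/2 and |c x zb| > d/2, with d = |zb - za|. *)
Lemma projective_orbit_not_weakly_dense (K : Cplx -> Prop) (x : Cplx -> Cplx)
    (za zb : Cplx) :
  subset_circle K -> K za -> K zb -> za <> zb -> Cnorm (x zb) <= Cnorm (x za) ->
  ~ weakly_dense K (fun g => exists (c : Cplx) (n : nat),
                       g = (fun z => Cmul c (Titer n x z))).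
Proof.
  intros Hc Ka Kb Hab Hle Hd.
  set (d := Cnorm (Csub zb za)).
  assert (Hdp : d > 0) by (apply Cnorm_sub_pos; congruence).
  assert (Hcf : cont_on K (fun z => Csub z za)).
  { intros z _ eps He; exists eps; split; [assumption|]; intros w _ Hw.
    replace (Csub (Csub w za) (Csub z za)) with (Csub w z) by (apply Ceq; simpl; ring).
    assumption. }
  destruct (Hd _ Hcf ((fun g => g za) :: (fun g => g zb) :: nil)) with (eps := d / 2)
    as [g [[c [n ->]] Happrox]].
  { intros phi Hin; destruct Hin as [<-|[<-|[]]]; apply eval_blf; assumption. }
  { lra. }
  pose proof (Happrox _ (or_introl eq_refl)) as Ha.
  pose proof (Happrox _ (or_intror (or_introl eq_refl))) as Hb; simpl in Ha, Hb.
  replace (Csub (Cmul c (Titer n x za)) (Csub za za)) with (Cmul c (Titer n x za)) in Ha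
    by (apply Ceq; simpl; ring).
  rewrite Cnorm_mul, Titer_norm in Ha by (apply Hc; assumption).
  pose proof (Cnorm_rev (Csub zb za) (Cmul c (Titer n x zb))) as Hrev.
  rewrite Cnorm_sub_sym in Hb; fold d in Hrev.
  rewrite Cnorm_mul, Titer_norm in Hrev by (apply Hc; assumption).
  pose proof (Rmult_le_compat_l _ _ _ (Cnorm_ge0 c) Hle).
  lra.
Qed.

Lemma Tmul_not_weakly_supercyclic (K : Cplx -> Prop) :
  subset_circle K -> (exists z1 z2, K z1 /\ K z2 /\ z1 <> z2) ->
  ~ Tmul_weakly_supercyclic K.
Proof.
  intros Hc [z1 [z2 [K1 [K2 Hne]]]] [x [_ Hd]].
  destruct (Rle_dec (Cnorm (x z2)) (Cnorm (x z1))).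
  - exact (projective_orbit_not_weakly_dense K x z1 z2 Hc K1 K2 Hne r Hd).
  - refine (projective_orbit_not_weakly_dense K x z2 z1 Hc K2 K1 _ _ Hd);
      [congruence | lra].
Qed.

(* Every complex number of modulus at most 2 is a sum of two unimodular ones:
   w = e (r/2 + i s) + e (r/2 - i s) with e = w/|w|, r = |w|, s = sqrt (1 - r^2/4). *)
Lemma unimodular_split (w : Cplx) : Cnorm w <= 2 ->
  exists p q, Cnorm p = 1 /\ Cnorm q = 1 /\ Cadd p q = w.
Proof.
  intro Hw; pose proof (Cnorm_ge0 w).
  destruct (Req_dec (Cnorm w) 0) as [Hz|Hnz].
  - apply Cnorm_zero_eq in Hz; subst w.
    exists Cone, (RtoC (-1)); split; [apply Cnorm_Cone|split].
    + rewrite Cnorm_RtoC, Rabs_left; lra.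
    + apply Ceq; simpl; ring.
  - set (r := Cnorm w) in *; assert (Hr : 0 < r) by lra.
    set (e := mkC (Re w / r) (Im w / r)).
    assert (He : Cnorm e = 1).
    { unfold e, Cnorm; simpl; pose proof (Cnorm_sq w) as Hsq; fold r in Hsq.
      replace (Re w / r * (Re w / r) + Im w / r * (Im w / r))
        with ((Re w * Re w + Im w * Im w) / (r * r)) by (field; lra).
      rewrite <- Hsq; unfold Rdiv; rewrite Rinv_r by nra; apply sqrt_1. }
    set (s := sqrt (1 - r * r / 4)).
    assert (Hs : s * s = 1 - r * r / 4) by (unfold s; apply sqrt_sqrt; nra).
    exists (Cmul e (mkC (r/2) s)), (Cmul e (mkC (r/2) (-s))).
    rewrite !Cnorm_mul, He; split; [|split].
    + unfold Cnorm; simpl; replace (r / 2 * (r / 2) + s * s) with 1 by lra.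
      rewrite sqrt_1; ring.
    + unfold Cnorm; simpl; replace (r / 2 * (r / 2) + - s * - s) with 1 by nra.
      rewrite sqrt_1; ring.
    + unfold e; apply Ceq; simpl; field; lra.
Qed.

Lemma unimodular_split_fun : exists U V : Cplx -> Cplx, forall w, Cnorm w <= 2 ->
  Cnorm (U w) = 1 /\ Cnorm (V w) = 1 /\ Cadd (U w) (V w) = w.
Proof.
  assert (Hex : forall w, exists pq : Cplx * Cplx, Cnorm w <= 2 ->
    Cnorm (fst pq) = 1 /\ Cnorm (snd pq) = 1 /\ Cadd (fst pq) (snd pq) = w).
  { intro w; destruct (Rle_dec (Cnorm w) 2) as [Hw|Hw].
    - destruct (unimodular_split w Hw) as [p [q Hpq]]; exists (p, q); intros _; exact Hpq.
    - exists (Cone, Cone); intro; contradiction. }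
  destruct (choice _ Hex) as [UV HUV].
  exists (fun w => fst (UV w)), (fun w => snd (UV w)); exact HUV.
Qed.

(* Kronecker property applied to conj: some power z^(n+1) is uniformly close
   to 1 on K. *)
Lemma kronecker_power_near_one (K : Cplx -> Prop) : Kronecker K ->
  forall eta, eta > 0 -> exists n : nat,
    forall z, K z -> Cnorm (Csub (Cpow z (S n)) Cone) < eta.
Proof.
  intros [_ [_ [Hc Hkr]]] eta Heta.
  destruct (Hkr Cconj (conj_cont K) (fun z Kz => eq_trans (Cnorm_conj z) (Hc z Kz)) eta Heta)
    as [n Hn].
  exists n; intros z Kz; rewrite unit_pow_S by (apply Hc; assumption); apply Hn, Kz.
Qed.

(* A set in which "distance < rho" implies "distance < sigma" (sigma <= rho/2)
   splits into clusters of diameter < rho; choosing one point per cluster gives a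
   retraction onto K that is constant on rho-neighbourhoods. *)
Lemma clustered_retraction (K : Cplx -> Prop) (rho sigma : R) :
  0 < sigma -> sigma <= rho / 2 ->
  (forall z z', K z -> K z' -> Cnorm (Csub z' z) < rho -> Cnorm (Csub z' z) < sigma) ->
  exists rep : Cplx -> Cplx, forall z, K z ->
    K (rep z) /\ Cnorm (Csub (rep z) z) < sigma /\
    forall z', K z' -> Cnorm (Csub z' z) < rho -> rep z' = rep z.
Proof.
  intros Hs0 Hsr Hgap.
  set (cluster := fun z p => K p /\ Cnorm (Csub p z) < rho).
  (* within K, rho-closeness is transitive, so clusters of close points coincide *)
  assert (Hsame : forall z z', K z -> K z' -> Cnorm (Csub z' z) < rho ->
                  cluster z' = cluster z).
  { intros z z' Kz Kz' Hzz; apply functional_extensionality; intro p.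
    apply propositional_extensionality; unfold cluster; cbv beta.
    pose proof (Hgap z z' Kz Kz' Hzz).
    split; intros [Kp Hp]; split; [assumption| |assumption|].
    - pose proof (Hgap z' p Kz' Kp Hp); pose proof (Cnorm_sub_tri p z' z); lra.
    - pose proof (Hgap z p Kz Kp Hp); pose proof (Cnorm_sub_tri p z z').
      rewrite (Cnorm_sub_sym z z') in *; lra. }
  exists (fun z => epsilon (inhabits Cone) (cluster z)); intros z Kz.
  assert (Hin : cluster z (epsilon (inhabits Cone) (cluster z))).
  { apply epsilon_spec; exists z; split; [assumption|]; rewrite Csub_self_norm; lra. }
  destruct Hin as [Kr Hr]; split; [assumption|split].
  - exact (Hgap z _ Kz Kr Hr).
  - intros z' Kz' Hzz.
    rewrite (Hsame z z' Kz Kz' Hzz); reflexivity.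
Qed.

Lemma lt_div_iff (x a N : R) : 0 < N -> (x < a / N <-> x * N < a).
Proof.
  intro HN; split; intro H.
  - apply (Rmult_lt_compat_r N) in H; [|lra].
    replace (a / N * N) with a in H by (field; lra); exact H.
  - apply (Rmult_lt_reg_r N); [lra|].
    replace (a / N * N) with a by (field; lra); exact H.
Qed.

(* Take z^N uniformly eta-close to 1 on K: by the power dichotomy, points of K
   at distance < 1/(2N) are in fact at distance < 4 eta / N. *)
Lemma kronecker_local_retraction (K : Cplx -> Prop) : Kronecker K ->
  forall sigma, sigma > 0 -> exists (rep : Cplx -> Cplx) (delta : R), delta > 0 /\
  forall z, K z -> K (rep z) /\ Cnorm (Csub (rep z) z) < sigma /\
    forall z', K z' -> Cnorm (Csub z' z) < delta -> rep z' = rep z.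
Proof.
  intros HK sigma Hsigma.
  set (eta := Rmin (1/32) (sigma/8)).
  assert (Heta : 0 < eta /\ eta <= 1/32 /\ eta <= sigma/8).
  { unfold eta; split; [apply Rmin_glb_lt; lra|split; [apply Rmin_l|apply Rmin_r]]. }
  destruct (kronecker_power_near_one K HK eta (proj1 Heta)) as [n Hn].
  destruct HK as [_ [_ [Hc _]]].
  set (N := INR (S n)).
  assert (HN : 1 <= N) by (unfold N; rewrite S_INR; pose proof (pos_INR n); lra).
  assert (HinvN : 0 < / N <= 1)
    by (split; [apply Rinv_0_lt_compat; lra|rewrite <- Rinv_1; apply Rinv_le_contravar; lra]).
  assert (Hgap : forall z z', K z -> K z' -> Cnorm (Csub z' z) < (/2) / N ->
                 Cnorm (Csub z' z) < (4 * eta) / N).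
  { intros z z' Kz Kz' Hd; apply lt_div_iff in Hd; [|lra]; apply lt_div_iff; [lra|].
    replace (4 * eta) with (2 * (2 * eta)) by ring.
    apply power_dichotomy; [apply Hc, Kz' | apply Hc, Kz | exact Hd |].
    pose proof (Cnorm_sub_tri (Cpow z' (S n)) Cone (Cpow z (S n))).
    rewrite (Cnorm_sub_sym Cone) in *; pose proof (Hn z Kz); pose proof (Hn z' Kz'); lra. }
  destruct (clustered_retraction K ((/2) / N) ((4 * eta) / N)) as [rep Hrep].
  - unfold Rdiv; apply Rmult_lt_0_compat; lra.
  - unfold Rdiv; nra.
  - exact Hgap.
  - exists rep, ((/2) / N); split; [unfold Rdiv; apply Rmult_lt_0_compat; lra|].
    intros z Kz; destruct (Hrep z Kz) as [Kr [Hr Hloc]].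
    repeat split; [exact Kr| |exact Hloc].
    assert (4 * eta / N <= 4 * eta) by (unfold Rdiv; nra); lra.
Qed.

Lemma locally_constant_cont (K : Cplx -> Prop) (g : Cplx -> Cplx) (delta : R) :
  delta > 0 -> (forall z z', K z -> K z' -> Cnorm (Csub z' z) < delta -> g z' = g z) ->
  cont_on K g.
Proof.
  intros Hd Hloc z Kz eps He; exists delta; split; [exact Hd|]; intros w Kw Hw.
  rewrite (Hloc z w Kz Kw Hw), Csub_self_norm; lra.
Qed.

Lemma Titer_one (n : nat) (z : Cplx) : Titer n (fun _ => Cone) z = Cpow z n.
Proof.
  induction n as [|n IH]; simpl; [reflexivity|]; unfold Tmul; rewrite IH; reflexivity.
Qed.

(* Norm density of {a z^k + a z^m}: freeze f on the clusters of a fine locally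
   constant retraction, scale by a = M/2 so that the frozen values have modulus
   <= 2, split them into two unimodular locally constant (hence continuous)
   functions u, v, and approximate u by z^k and v by z^m (Kronecker property). *)
Lemma kronecker_two_powers_dense (K : Cplx -> Prop) : Kronecker K ->
  norm_dense K (fun g => exists (a : R) (k m : nat), 0 <= a /\
     g = (fun z => Cadd (Cmul (RtoC a) (Titer k (fun _ => Cone) z))
                        (Cmul (RtoC a) (Titer m (fun _ => Cone) z)))).
Proof.
  intros HK f Hf eps He.
  pose proof HK as [_ [Hcomp [_ Hkr]]].
  destruct (compact_cont_bounded K f Hcomp Hf) as [M [HM HfM]].
  destruct (compact_unif_cont K f Hcomp Hf (eps/3) ltac:(lra)) as [du [Hdu Hunif]].
  destruct (kronecker_local_retraction K HK du Hdu) as [rep [delta [Hdelta Hrep]]].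
  destruct unimodular_split_fun as [U [V HUV]].
  set (a := M / 2); assert (Ha : 0 < a) by (unfold a; lra).
  set (w := fun z => Cmul (RtoC (/ a)) (f (rep z))).
  assert (Hw : forall z, K z -> Cnorm (w z) <= 2).
  { intros z Kz; unfold w.
    rewrite Cnorm_mul, Cnorm_RtoC, Rabs_pos_eq by (apply Rlt_le, Rinv_0_lt_compat; lra).
    pose proof (HfM _ (proj1 (Hrep z Kz))).
    apply (Rmult_le_reg_l a); [exact Ha|].
    rewrite <- Rmult_assoc, Rinv_r by lra; unfold a in *; lra. }
  set (u := fun z => U (w z)); set (v := fun z => V (w z)).
  assert (Hwloc : forall z z', K z -> K z' -> Cnorm (Csub z' z) < delta -> w z' = w z)
    by (intros z z' Kz Kz' Hzz; unfold w; rewrite (proj2 (proj2 (Hrep z Kz)) z' Kz' Hzz);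
        reflexivity).
  assert (Hcu : cont_on K u)
    by (apply (locally_constant_cont K u delta Hdelta); intros; unfold u; f_equal; auto).
  assert (Hcv : cont_on K v)
    by (apply (locally_constant_cont K v delta Hdelta); intros; unfold v; f_equal; auto).
  assert (He3 : eps / (3 * a) > 0) by (apply Rdiv_lt_0_compat; lra).
  destruct (Hkr u Hcu (fun z Kz => proj1 (HUV _ (Hw z Kz))) _ He3) as [k Hk].
  destruct (Hkr v Hcv (fun z Kz => proj1 (proj2 (HUV _ (Hw z Kz)))) _ He3) as [m Hm].
  exists (fun z => Cadd (Cmul (RtoC a) (Titer k (fun _ => Cone) z))
                        (Cmul (RtoC a) (Titer m (fun _ => Cone) z))).
  split; [exists a, k, m; split; [lra|reflexivity]|].
  intros z Kz; rewrite !Titer_one.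
  destruct (Hrep z Kz) as [Kr [Hr _]].
  (* f (rep z) = a (u z + v z), so the error splits into three terms *)
  assert (Hfr : f (rep z) = Cmul (RtoC a) (Cadd (u z) (v z))).
  { unfold u, v; rewrite (proj2 (proj2 (HUV _ (Hw z Kz)))); unfold w.
    apply Ceq; simpl; field; lra. }
  replace (Csub (f z) (Cadd (Cmul (RtoC a) (Cpow z k)) (Cmul (RtoC a) (Cpow z m)))) with
    (Cadd (Csub (f z) (f (rep z))) (Cadd (Cmul (RtoC a) (Csub (u z) (Cpow z k)))
                                        (Cmul (RtoC a) (Csub (v z) (Cpow z m)))))
    by (rewrite Hfr; apply Ceq; simpl; ring).
  assert (Hfreeze : Cnorm (Csub (f z) (f (rep z))) < eps / 3)
    by (rewrite Cnorm_sub_sym; apply Hunif; assumption).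
  assert (Happrox : Cnorm (Cadd (Cmul (RtoC a) (Csub (u z) (Cpow z k)))
       (Cmul (RtoC a) (Csub (v z) (Cpow z m)))) <= 2 * eps / 3).
  { eapply Rle_trans; [apply Cnorm_add|].
    rewrite !Cnorm_mul, Cnorm_RtoC, Rabs_pos_eq by lra.
    rewrite (Cnorm_sub_sym (u z)), (Cnorm_sub_sym (v z)).
    pose proof (Hk z Kz); pose proof (Hm z Kz).
    assert (a * (eps / (3 * a)) = eps / 3) by (field; lra).
    nra. }
  pose proof (Cnorm_add (Csub (f z) (f (rep z))) (Cadd (Cmul (RtoC a) (Csub (u z) (Cpow z k)))
       (Cmul (RtoC a) (Csub (v z) (Cpow z m))))); lra.
Qed.

Theorem mainTheorem14 (K : Cplx -> Prop) :
  Kronecker K ->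
  (exists z1 z2, K z1 /\ K z2 /\ z1 <> z2) ->
  ~ Tmul_weakly_supercyclic K /\
  norm_dense K (fun g => exists (a : R) (k m : nat), 0 <= a /\
     g = (fun z => Cadd (Cmul (RtoC a) (Titer k (fun _ => Cone) z))
                        (Cmul (RtoC a) (Titer m (fun _ => Cone) z)))).
Proof.
  intros HK Htwo; split.
  - exact (Tmul_not_weakly_supercyclic K (proj1 (proj2 (proj2 HK))) Htwo).
  - exact (kronecker_two_powers_dense K HK).
Qed.
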